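(* The ideal $I^{(k,r)}$ coincides with each of $J_1=\{f\in V: u_\lambda(f)=0$ for all $\lambda\in P$ with $\sharp^{(k,r)}(\lambda)\ge1\}$, $J_2=\{f\in V: u_\lambda(f)=0$ for all $\lambda\in S^{(k,r)}\}$, $J_3=\{f\in V: u_\lambda(f)=0$ for all $\lambda\in S'^{(k,r)}\}$, where $u_\lambda$ is evaluated at the specialization $(\ast)$.
   Context: Fix integers $n\ge2$, $1\le k\le n-1$, $r\ge2$, $g=\gcd(k+1,r-1)$, $\tau=e^{2\pi\sqrt{-1}/(r-1)}$, and specialize $(\ast)$: $t=u^{(r-1)/g}$, $q=\tau u^{-(k+1)/g}$; $\mathbb K$ is the resulting field of rational functions in (a root of) $u$ and $V=\mathbb K[x_1^{\pm1},\dots,x_n^{\pm1}]$. $Z^{(k,r)}$ is the set of $z\in\mathbb K^n$ for which there exist distinct $i_1,\dots,i_{k+1}\in\{1,\dots,n\}$ and $s_1,\dots,s_k\in\mathbb Z_{\ge0}$ with $z_{i_{a+1}}=z_{i_a}tq^{s_a}$ ($1\le a\le k$), $\sum_as_a\le r-2$, and $i_a<i_{a+1}$ whenever $s_a=0$; $I^{(k,r)}=\{f\in V:f(z)=0\ \forall z\in Z^{(k,r)}\}$. Let $P=\mathbb Z^n$. For $\lambda\in P$, $\rho(\lambda)$ is the unique permutation of $(\frac{n-1}2,\frac{n-3}2,\dots,-\frac{n-1}2)$ with $\rho(\lambda)_i>\rho(\lambda)_j$ iff $\lambda_i>\lambda_j$ or ($\lambda_i=\lambda_j$, $i<j$). For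 $f\in V$, $u_\lambda(f)=f(t^{-\rho(\lambda)_1}q^{-\lambda_1},\dots,t^{-\rho(\lambda)_n}q^{-\lambda_n})$. A wheel in $\lambda$ is a tuple $(i_1,\dots,i_{k+1})$ of distinct indices such that $(u_\lambda(x_1),\dots,u_\lambda(x_n))$ satisfies the defining conditions of $Z^{(k,r)}$ with these indices, i.e. $u_\lambda(x_{i_{a+1}})=u_\lambda(x_{i_a})tq^{s_a}$ for some $s_a\in\mathbb Z_{\ge0}$ with $\sum s_a\le r-2$ and $i_a<i_{a+1}$ if $s_a=0$. Two wheels that are cyclic rotations of each other are identified; $\sharp^{(k,r)}(\lambda)$ is the number of equivalence classes of wheels in $\lambda$. For $\lambda\in P$ let $(i_1,\dots,i_n)$ be the indices with $\rho(\lambda)_{i_a}=\frac{n+1}2-a$. For $a\ge2,b\ge1$, $(i,j)$ is a neighborhood of type $(a,b)$ in $\lambda$ if $\rho(\lambda)_i-\rho(\lambda)_j=a-1$ and either $\lambda_i-\lambda_j\le b-1$, or $\lambda_i-\lambda_j=b$ and $j<i$. $S^{(k,r)}$: the $\lambda$ having a neighborhood of type $(k+1,r-1)$; $S'^{(k,r)}$: the $\lambda$ having a neighborhood $(i,j)$ of type $(k+1,r-1)$ with $\lambda_i-\lambda_j\le r-2$. *)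

From mathcomp Require Import all_boot all_order all_algebra.
From mathcomp Require Import fraction.
Set Implicit Arguments.
Unset Strict Implicit.
Unset Printing Implicit Defensive.
Import Order.TTheory GRing.Theory Num.Theory.
Local Open Scope ring_scope.

Section WheelDefs.

Variable F : numClosedFieldType.

(* K = F(w), rational functions in w, where w is a square root of u,
   i.e. u = w^2.  (The "root of u" needed to make sense of t^{-rho_i}
   for half-integral rho_i.) *)
Definition KK := {fraction {poly F}}.
Definition w_var : KK := tofrac 'X.
Definition u_var : KK := w_var ^+ 2.

Variables (n k r : nat).

Definition gg : nat := gcdn k.+1 r.-1.

(* tau = exp(2 pi i/(r-1)) : the square of the (r-1)-th root of -1 with
   minimal nonnegative argument, i.e. (exp(pi i/(r-1)))^2. *)
Definition tau : F := (r.-1).-root (-1) ^+ 2.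

Definition t_sp : KK := u_var ^+ (r.-1 %/ gg).
Definition q_sp : KK := tofrac (tau%:P) * u_var ^- (k.+1 %/ gg).
Definition sqrt_t : KK := w_var ^+ (r.-1 %/ gg).

(* Laurent polynomials in x_1..x_n over K, as finite formal sums
   of terms c * x^e with e in Z^n. *)
Definition laurent := seq (KK * {ffun 'I_n -> int}).
Definition leval (f : laurent) (z : 'I_n -> KK) : KK :=
  \sum_(m <- f) m.1 * \prod_(i < n) z i ^ (m.2 i).

(* wheel condition for a point z with indices w = (i_1,...,i_{k+1});
   the s_a are bounded by r-2 (automatic since sum s_a <= r-2). *)
Definition is_wheel_at (z : 'I_n -> KK) (w : (k.+1).-tuple 'I_n) : bool :=
  uniq w &&
  [exists s : {ffun 'I_k -> 'I_(r.-1)},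
     (\sum_(a < k) nat_of_ord (s a) <= r - 2)%N &&
     [forall a : 'I_k,
        (z (tnth w (lift ord0 a)) == z (tnth w (widen_ord (leqnSn k) a)) * t_sp * q_sp ^+ s a)
        && ((s a == 0 :> nat) ==>
            (tnth w (widen_ord (leqnSn k) a) < tnth w (lift ord0 a))%N)]].

(* Z^{(k,r)} (points of the torus (K^x)^n, where Laurent polynomials
   can be evaluated) *)
Definition inZ (z : 'I_n -> KK) : Prop :=
  (forall i, z i != 0) /\ exists w, is_wheel_at z w.

Definition ideal_I (f : laurent) : Prop :=
  forall z, inZ z -> leval f z = 0.

Definition wt := 'I_n -> int.

Definition rank0 (lam : wt) (i : 'I_n) : nat :=
  #|[set j : 'I_n | (lam i < lam j) || ((lam j == lam i) && (j < i)%N)]|.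
(* rho2 lam i = 2 * rho(lam)_i = (n-1) - 2 * rank0 *)
Definition rho2 (lam : wt) (i : 'I_n) : int :=
  (n%:Z - 1) - 2 * (rank0 lam i)%:Z.

(* the point (u_lam(x_1),...,u_lam(x_n)):
   u_lam(x_i) = t^{-rho(lam)_i} q^{-lam_i} *)
Definition upt (lam : wt) (i : 'I_n) : KK :=
  sqrt_t ^ (- rho2 lam i) * q_sp ^ (- lam i).

Definition u_lam (lam : wt) (f : laurent) : KK := leval f (upt lam).

Definition wheels (lam : wt) : {set (k.+1).-tuple 'I_n} :=
  [set w | is_wheel_at (upt lam) w].
Definition wheel_classes (lam : wt) : {set {set (k.+1).-tuple 'I_n}} :=
  [set [set rot_tuple j w | j : 'I_k.+1] | w in wheels lam].
Definition sharp (lam : wt) : nat := #|wheel_classes lam|.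

Definition nbhd (a b : nat) (lam : wt) (i j : 'I_n) : bool :=
  (rho2 lam i - rho2 lam j == 2 * (a%:Z - 1)) &&
  ((lam i - lam j <= b%:Z - 1) || ((lam i - lam j == b%:Z) && (j < i)%N)).

Definition inS (lam : wt) : Prop :=
  exists i j, nbhd k.+1 r.-1 lam i j.
Definition inS' (lam : wt) : Prop :=
  exists i j, nbhd k.+1 r.-1 lam i j /\ lam i - lam j <= r%:Z - 2.

Definition ideal_J1 (f : laurent) : Prop :=
  forall lam, (1 <= sharp lam)%N -> u_lam lam f = 0.
Definition ideal_J2 (f : laurent) : Prop :=
  forall lam, inS lam -> u_lam lam f = 0.
Definition ideal_J3 (f : laurent) : Prop :=
  forall lam, inS' lam -> u_lam lam f = 0.

End WheelDefs.

(** The inclusions I ⊆ J1 ⊆ J3 and I ⊆ J2 ⊆ J3 only need that every λ in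
    S^{(k,r)} carries a wheel: the k+1 indices of consecutive ρ-rank starting at
    i form a chain whose q-gaps add up to λ_i - λ_j; if this is at most r-2 they
    form a wheel as they stand, and if it is r-1 a cyclic rotation starting
    after a positive gap is a wheel, because t^{k+1} q^{r-1} = 1 under (∗).

    For J3 ⊆ I take a point z of Z^{(k,r)} with wheel w.  The coordinates of z
    in w form a chain z_{w_{a+1}} = z_{w_a} t q^{s_a}, so z depends on one free
    scale per block (the block w and the singletons outside w).  The points
    u_λ whose weights decrease along w by exactly s_a and put all other
    coordinates outside [λ_{w_k}, λ_{w_0}] lie in S'^{(k,r)} and have the same
    shape.  The scales are then freed one block at a time: adding a multiple
    N(r-1) of the weight to a block that lies above the blocks not yet freed
    does not change the ρ-order, and multiplies the block scale by
    q^{-N(r-1)} = t^{N(k+1)}; these are infinitely many distinct values, and a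
    one-variable Laurent polynomial with infinitely many zeros vanishes. *)

From Pilot Require Import Defs.
From mathcomp Require Import all_boot all_order all_algebra fraction.
From mathcomp Require Import zify ring.
Set Implicit Arguments.
Unset Strict Implicit.
Unset Printing Implicit Defensive.
Import Order.TTheory GRing.Theory Num.Theory.
Local Open Scope ring_scope.

Section RhoOrder.
Variable n : nat.
Implicit Types (lam : wt n) (a b c i j : 'I_n).

Definition before lam a b := (lam b < lam a) || ((lam a == lam b) && (a < b)%N).

Lemma before_irr lam a : ~~ before lam a a.
Proof. by rewrite /before ltxx ltnn andbF. Qed.

Lemma before_trans lam a b c : before lam a b -> before lam b c -> before lam a c.
Proof.
rewrite /before => /orP[h1|/andP[/eqP e1 h1]] /orP[h2|/andP[/eqP e2 h2]]; apply/orP.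
- by left; lia.
- by left; lia.
- by left; lia.
- by right; apply/andP; split; [apply/eqP; lia | lia].
Qed.

Lemma before_total lam a b : a != b -> before lam a b || before lam b a.
Proof.
move=> nab; have {}nab : nat_of_ord a != b by apply: contra nab => /eqP/val_inj ->.
by rewrite /before; case: (ltrgtP (lam a) (lam b)) => //= _; lia.
Qed.

Lemma before_asym lam a b : before lam a b -> ~~ before lam b a.
Proof.
by move=> h; apply/negP => /(before_trans h); rewrite (negbTE (before_irr _ _)).
Qed.

Lemma before_le lam a b : before lam a b -> lam b <= lam a.
Proof. by rewrite /before => /orP[/ltW //|/andP[/eqP -> _]]. Qed.

Lemma before_subrE (lam1 lam2 : wt n) a b :
  lam1 a - lam1 b = lam2 a - lam2 b -> before lam1 a b = before lam2 a b.
Proof.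
move=> h; rewrite /before.
have -> : (lam1 b < lam1 a) = (lam2 b < lam2 a) by apply/idP/idP => ?; lia.
by have -> : (lam1 a == lam1 b) = (lam2 a == lam2 b) by apply/eqP/eqP => ?; lia.
Qed.

Lemma rank0_lt lam a b : before lam a b -> (rank0 lam a < rank0 lam b)%N.
Proof.
move=> ab; apply: proper_card; apply/properP; split.
  by apply/subsetP => x; rewrite !inE => /before_trans; apply.
by exists a; rewrite !inE ?ab ?before_irr.
Qed.

Lemma rank0_ltE lam a b : (rank0 lam a < rank0 lam b)%N = before lam a b.
Proof.
apply/idP/idP => [lt_ab|]; last exact: rank0_lt.
have [eab|nab] := eqVneq a b; first by rewrite eab ltnn in lt_ab.
by case/orP: (before_total lam nab) => // /rank0_lt; lia.
Qed.

Lemma rank0_inj lam : injective (rank0 lam).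
Proof.
move=> a b e; apply/eqP/negPn/negP => nab.
by case/orP: (before_total lam nab); rewrite -rank0_ltE e ltnn.
Qed.

Lemma rank0_ltn lam i : (rank0 lam i < n)%N.
Proof.
have : [set j | before lam j i] \proper [set: 'I_n].
  by apply/properP; split; [apply/subsetP|exists i; rewrite ?inE ?before_irr].
by move/proper_card; rewrite cardsT card_ord.
Qed.

Lemma rank0_onto lam m : (m < n)%N -> exists i, rank0 lam i = m.
Proof.
move=> lt_mn; pose g i := Ordinal (rank0_ltn lam i).
have g_inj : injective g by move=> a b /(congr1 val) /rank0_inj.
have /codomP [i /(congr1 val) /= ri] := injF_onto g_inj (Ordinal lt_mn).
by exists i.
Qed.

Lemma rank0_succ lam a b : before lam a b ->
  (forall c, before lam a c -> before lam c b -> False) ->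
  rank0 lam b = (rank0 lam a).+1.
Proof.
move=> ab no_between; have := rank0_lt ab => lt_ab.
apply/eqP; rewrite eqn_leq lt_ab andbT leqNgt; apply/negP => gap.
have [c rc] : exists c, rank0 lam c = (rank0 lam a).+1.
  by apply: rank0_onto; have := rank0_ltn lam b; lia.
by apply: (no_between c); rewrite -rank0_ltE rc.
Qed.

Lemma eq_rank0 lam1 lam2 i :
  (forall x, before lam1 x i = before lam2 x i) -> rank0 lam1 i = rank0 lam2 i.
Proof. by move=> h; apply: eq_card => x; rewrite !inE -/(before _ x i) h. Qed.

End RhoOrder.

Lemma prodr_exprz (R : comUnitRingType) (I : finType) (v : R) (g : I -> int) :
  v \is a GRing.unit -> \prod_i v ^ g i = v ^ (\sum_i g i).
Proof. by move=> v_unit; rewrite (big_morph _ (exprzDr v_unit) (expr0z v)). Qed.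

Lemma chain_prodE (R : pzRingType) (g c : nat -> R) (k : nat) :
  (forall m, (m < k)%N -> g m.+1 = g m * c m) ->
  forall m, (m <= k)%N -> g m = g 0%N * \prod_(l < m) c l.
Proof.
move=> gS; elim=> [|m IH] lt_mk; first by rewrite big_ord0 mulr1.
by rewrite gS // IH 1?ltnW // big_ord_recr /= mulrA.
Qed.

Lemma laurent_sum_eq0 (K : fieldType) (T : eqType) (s : seq T) (c : T -> K)
    (e : T -> int) (vs : nat -> K) :
  injective vs -> (forall N, vs N != 0) ->
  (forall N, \sum_(m <- s) c m * vs N ^ e m = 0) ->
  forall v, v != 0 -> \sum_(m <- s) c m * v ^ e m = 0.
Proof.
move=> vs_inj vs_neq0 vs_root v v_neq0.
set S := (\max_(m <- s) `|e m|)%N.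
have eS_ge0 m : m \in s -> 0 <= e m + S%:Z.
  move=> ms; have : (`|e m| <= S)%N by apply: (@leq_bigmax_seq _ _ _ (fun m => `|e m|%N) m ms).
  by rewrite -lez_nat; lia.
pose p := \sum_(m <- s) c m *: 'X^(absz (e m + S%:Z)).
have pE x : x != 0 -> p.[x] = (\sum_(m <- s) c m * x ^ e m) * x ^+ S.
  move=> x_neq0; rewrite horner_sum big_distrl /= !big_seq.
  apply: eq_bigr => m ms; rewrite hornerZ hornerXn -mulrA; congr (_ * _).
  by rewrite !exprnP -exprzDr ?unitfE // gez0_abs ?eS_ge0.
have p0 : p = 0.
  apply/eqP/negPn/negP => p_neq0.
  have roots : all (root p) (map vs (iota 0 (size p))).
    by apply/allP => x /mapP [N _ ->]; rewrite /root pE // vs_root mul0r.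
  have := max_poly_roots p_neq0 roots.
  by rewrite map_inj_uniq ?iota_uniq // size_map size_iota ltnn => /(_ isT).
have /esym/eqP := pE v v_neq0.
by rewrite p0 horner0 mulf_eq0 expf_eq0 (negbTE v_neq0) andbF orbF => /eqP.
Qed.

Section Specialization.
Variables (F : numClosedFieldType) (k r : nat).
Hypothesis r_ge2 : (2 <= r)%N.
Local Notation st := (sqrt_t F k r).
Local Notation q := (q_sp F k r).
Local Notation t := (t_sp F k r).

Lemma w_var_neq0 : w_var F != 0.
Proof. by rewrite tofrac_eq0 polyX_eq0. Qed.

Lemma sqrt_t_neq0 : st != 0.
Proof. by rewrite expf_neq0 // w_var_neq0. Qed.

Lemma q_sp_neq0 : q != 0.
Proof.
rewrite /q_sp mulf_neq0 //.
  by rewrite tofrac_eq0 polyC_eq0 /tau expf_neq0 // rootC_eq0 ?oppr_eq0 ?oner_eq0 //; lia.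
by rewrite invr_eq0 expf_neq0 // /u_var expf_neq0 // w_var_neq0.
Qed.

Lemma t_spE : t = st ^+ 2.
Proof. by rewrite /t_sp /sqrt_t /u_var -!exprM mulnC. Qed.

Lemma tau_expr : tau F r ^+ r.-1 = 1.
Proof.
by rewrite /tau -exprM mulnC exprM rootCK ?sqrrN ?expr1n //; lia.
Qed.

(* Both sides are powers of [w_var]; the exponents agree because
   (r-1)/g * (k+1) = (k+1)/g * (r-1). *)
Lemma q_sp_expNr : q ^- r.-1 = st ^+ (2 * k.+1).
Proof.
rewrite /q_sp exprMn -tofracXn -rmorphXn tau_expr tofrac1 mul1r.
rewrite /sqrt_t /u_var -exprVn -!exprM invrK.
set a := (r.-1 %/ gg k r)%N; set b := (k.+1 %/ gg k r)%N.
have ag : (a * gg k r = r.-1)%N by rewrite divnK // dvdn_gcdr.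
have bg : (b * gg k r = k.+1)%N by rewrite divnK // dvdn_gcdl.
by rewrite -exprM; congr (_ ^+ _); rewrite -ag -bg; ring.
Qed.

Lemma sqrt_t_expM_inj (M : nat) : (0 < M)%N -> injective (fun N : nat => st ^+ (M * N)).
Proof.
move=> M_gt0 N1 N2 /= /eqP.
rewrite /sqrt_t /w_var -!exprM -!tofracXn tofrac_eq => /eqP eX.
have /= := congr1 (fun p : {poly F} => size p) eX.
rewrite !size_polyXn => -[] e.
have a_gt0 : (0 < r.-1 %/ gg k r)%N.
  by rewrite divn_gt0 ?gcdn_gt0 // dvdn_leq ?dvdn_gcdr //; lia.
by apply/eqP; rewrite -(eqn_pmul2l M_gt0) -(eqn_pmul2l a_gt0); apply/eqP; lia.
Qed.

End Specialization.

Section Evaluation.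
Variables (F : numClosedFieldType) (n : nat).
Implicit Types (f : laurent F n) (a : 'I_n -> KK F) (b : 'I_n -> bool).

Lemma eq_leval f g1 g2 : g1 =1 g2 -> leval f g1 = leval f g2.
Proof. by move=> eg; apply: eq_bigr => m _; under eq_bigr do rewrite eg. Qed.

Lemma leval_scale f a b v : v != 0 ->
  leval f (fun i => a i * (if b i then v else 1)) =
  \sum_(m <- f) (m.1 * \prod_i a i ^ m.2 i) * v ^ (\sum_i if b i then m.2 i else 0).
Proof.
move=> v_neq0; apply: eq_bigr => m _; rewrite -mulrA; congr (_ * _).
rewrite (eq_bigr (fun i => a i ^ m.2 i * (if b i then v else 1) ^ m.2 i));
  last by move=> i _; apply: expfzMl.
rewrite big_split /= -prodr_exprz ?unitfE //; congr (_ * _).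
by apply: eq_bigr => i _; case: (b i); rewrite ?exp1rz ?expr0z.
Qed.

Lemma leval_scale_eq0 f a b (vs : nat -> KK F) :
  injective vs -> (forall N, vs N != 0) ->
  (forall N, leval f (fun i => a i * (if b i then vs N else 1)) = 0) ->
  forall v, v != 0 -> leval f (fun i => a i * (if b i then v else 1)) = 0.
Proof.
move=> vs_inj vs_neq0 vs_root v v_neq0.
pose c (m : KK F * {ffun 'I_n -> int}) := m.1 * \prod_i a i ^ m.2 i.
pose e (m : KK F * {ffun 'I_n -> int}) := \sum_i if b i then m.2 i else 0.
have scaleE x : x != 0 ->
    leval f (fun i => a i * (if b i then x else 1)) = \sum_(m <- f) c m * x ^ e m.
  exact: leval_scale.
have root N := etrans (esym (scaleE _ (vs_neq0 N))) (vs_root N).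
by rewrite scaleE // (laurent_sum_eq0 vs_inj vs_neq0 root v_neq0).
Qed.

End Evaluation.

Lemma lift0_inord k (a : 'I_k) : lift ord0 a = inord a.+1 :> 'I_k.+1.
Proof. by apply/val_inj; rewrite /= inordK // ltnS. Qed.

Lemma widen_inord k (a : 'I_k) : widen_ord (leqnSn k) a = inord a :> 'I_k.+1.
Proof. by apply: val_inj; rewrite /= inordK // ltnS ltnW. Qed.

Section Wheels.
Variables (F : numClosedFieldType) (n k r : nat).
Hypothesis r_ge2 : (2 <= r)%N.
Local Notation t := (t_sp F k r).
Local Notation q := (q_sp F k r).

Lemma is_wheel_atP (z : 'I_n -> KK F) (w : (k.+1).-tuple 'I_n) :
  is_wheel_at r z w <->
  uniq w /\ exists s : nat -> nat, [/\ (\sum_(a < k) s a <= r - 2)%N,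
    forall a, (a < k)%N ->
      z (tnth w (inord a.+1)) = z (tnth w (inord a)) * t * q ^+ s a &
    forall a, (a < k)%N -> s a = 0%N -> (tnth w (inord a) < tnth w (inord a.+1))%N].
Proof.
split=> [/andP [w_uniq /existsP [s /andP [s_sum /forallP s_rel]]] | [w_uniq [s [s_sum s_rel s_ord]]]].
  split=> //; exists (fun a => if insub a is Some a then nat_of_ord (s a) else 0%N).
  have sE (a : 'I_k) : (if insub (val a) is Some a then nat_of_ord (s a) else 0%N) = s a.
    by rewrite valK.
  split; first by under eq_bigr do rewrite sE.
    move=> a lt_ak; have /andP [/eqP] := s_rel (Ordinal lt_ak).
    by rewrite lift0_inord widen_inord -[a]/(val (Ordinal lt_ak)) sE.
  move=> a lt_ak; have /andP [_ /implyP] := s_rel (Ordinal lt_ak).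
  by rewrite lift0_inord widen_inord -[a]/(val (Ordinal lt_ak)) sE => ord_a /eqP /ord_a.
have lt_s (a : 'I_k) : (s a < r.-1)%N.
  have : (s a <= \sum_(a < k) s a)%N by rewrite (bigD1 a) //= leq_addr.
  lia.
apply/andP; split=> //; apply/existsP; exists [ffun a => Ordinal (lt_s a)].
apply/andP; split; first by under eq_bigr do rewrite ffunE.
apply/forallP => a; rewrite ffunE lift0_inord widen_inord s_rel // eqxx /=.
by apply/implyP => /eqP; apply: s_ord.
Qed.

End Wheels.

Section Points.
Variables (F : numClosedFieldType) (n k r : nat).
Hypothesis r_ge2 : (2 <= r)%N.
Local Notation st := (sqrt_t F k r).
Local Notation q := (q_sp F k r).
Local Notation t := (t_sp F k r).
Local Notation upt := (@upt F n k r).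

Lemma upt_neq0 lam i : upt lam i != 0.
Proof. by rewrite mulf_neq0 // expfz_neq0 // ?sqrt_t_neq0 ?q_sp_neq0. Qed.

Lemma upt_succ lam a b (s : nat) : rank0 lam b = (rank0 lam a).+1 ->
  lam b = lam a - s%:Z -> upt lam b = upt lam a * t * q ^+ s.
Proof.
move=> rb lb; rewrite /Defs.upt /rho2 rb lb.
have -> : - ((n%:Z - 1) - 2 * (rank0 lam a).+1%:Z) =
  - ((n%:Z - 1) - 2 * (rank0 lam a)%:Z) + 2%N%:Z by lia.
have -> : - (lam a - s%:Z) = - lam a + s%:Z by lia.
rewrite (exprzDr (x := st)) ?unitfE ?sqrt_t_neq0 //.
rewrite (exprzDr (x := q)) ?unitfE ?q_sp_neq0 // t_spE -!exprnP; ring.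
Qed.

(* Going once around a wheel: k steps of rank and a weight drop of r-1 cost
   t^k q^{-(r-1)} = t^{-1}, since t^{k+1} q^{r-1} = 1. *)
Lemma upt_wrap lam a b : rank0 lam b = (rank0 lam a + k)%N ->
  lam a = lam b + (r.-1)%:Z -> upt lam a = upt lam b * t.
Proof.
move=> rb la; rewrite /Defs.upt /rho2 rb la.
have -> : - ((n%:Z - 1) - 2 * (rank0 lam a + k)%N%:Z) =
  - ((n%:Z - 1) - 2 * (rank0 lam a)%:Z) + (2 * k)%N%:Z by lia.
have -> : - (lam b + (r.-1)%:Z) = - lam b + - (r.-1)%:Z by lia.
rewrite (exprzDr (x := st)) ?unitfE ?sqrt_t_neq0 //.
rewrite (exprzDr (x := q)) ?unitfE ?q_sp_neq0 //.
rewrite -exprnN q_sp_expNr // t_spE -!exprnP mulnS exprD; ring.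
Qed.

End Points.

(* [shift] is the rotation a ↦ a + p + 1 of Z/(k+1); it sends k to p. *)
Lemma sum_rot_drop (k p : nat) (g : nat -> nat) : (p < k)%N ->
  let shift a := if (a + p.+1 < k.+1)%N then (a + p.+1)%N else (a + p.+1 - k.+1)%N in
  (\sum_(a < k) (if shift a == k then 0 else g (shift a)) + g p = \sum_(m < k) g m)%N.
Proof.
move=> lt_pk shift.
have shift_lt (a : 'I_k.+1) : (shift a < k.+1)%N.
  by rewrite /shift; have := ltn_ord a; case: ifP; lia.
pose G (m : 'I_k.+1) := if m == k :> nat then 0%N else g m.
have -> : (\sum_(m < k) g m = \sum_(m < k.+1) G m)%N.
  rewrite big_ord_recr /= /G eqxx addn0; apply: eq_bigr => m _ /=.
  by rewrite ifN_eq // neq_ltn ltn_ord.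
rewrite (reindex_inj (h := fun a : 'I_k.+1 => Ordinal (shift_lt a))) /=; last first.
  move=> a b /(congr1 val); rewrite /= /shift => e; apply/val_inj => /=.
  by move: e; have := ltn_ord a; have := ltn_ord b; case: ifP; case: ifP; lia.
have shift_max : shift k = p by rewrite /shift; case: ifP; lia.
by rewrite big_ord_recr /G /= shift_max (ltn_eqF lt_pk).
Qed.

Section NeighbourhoodWheels.
Variables (F : numClosedFieldType) (n k r : nat).
Hypothesis r_ge2 : (2 <= r)%N.
Local Notation upt := (@upt F n k r).
Local Notation t := (t_sp F k r).
Local Notation q := (q_sp F k r).
Variables (lam : wt n) (i j : 'I_n).
Hypothesis rank_ij : rank0 lam j = (rank0 lam i + k)%N.

Definition walk m := odflt i [pick x | rank0 lam x == (rank0 lam i + m)%N].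

Lemma rank0_walk m : (m <= k)%N -> rank0 lam (walk m) = (rank0 lam i + m)%N.
Proof.
move=> le_mk; rewrite /walk; case: pickP => [x /eqP // | none].
have [x rx] : exists x, rank0 lam x = (rank0 lam i + m)%N.
  by apply: rank0_onto; have := rank0_ltn lam j; lia.
by move: (none x); rewrite rx eqxx.
Qed.

Lemma walk0 : walk 0 = i.
Proof. by apply: (@rank0_inj _ lam); rewrite rank0_walk // addn0. Qed.

Lemma walk_last : walk k = j.
Proof. by apply: (@rank0_inj _ lam); rewrite rank0_walk. Qed.

Lemma walk_inj m1 m2 : (m1 <= k)%N -> (m2 <= k)%N -> walk m1 = walk m2 -> m1 = m2.
Proof. by move=> le1 le2 /(congr1 (rank0 lam)); rewrite !rank0_walk //; lia. Qed.

Lemma before_walk m : (m < k)%N -> before lam (walk m) (walk m.+1).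
Proof. by move=> lt_mk; rewrite -rank0_ltE !rank0_walk //; lia. Qed.

Definition gap m := absz (lam (walk m) - lam (walk m.+1)).

Lemma lam_walkS m : (m < k)%N -> lam (walk m.+1) = lam (walk m) - (gap m)%:Z.
Proof. by move=> lt_mk; have := before_le (before_walk lt_mk); rewrite /gap; lia. Qed.

Lemma walk_gap0 m : (m < k)%N -> gap m = 0%N -> (walk m < walk m.+1)%N.
Proof.
move=> lt_mk gap0; have := before_walk lt_mk.
by rewrite /before lam_walkS // gap0 subr0 ltxx eqxx.
Qed.

Lemma sum_gap : ((\sum_(m < k) gap m)%N)%:Z = lam i - lam j.
Proof.
rewrite (big_morph Posz PoszD (erefl (Posz 0))) -walk0 -walk_last.
rewrite -(big_mkord xpredT (fun m => (gap m)%:Z)).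
rewrite (telescope_sumr_eq (fun m => - lam (walk m))) ?opprK 1?addrC //.
by move=> m /andP [_ lt_mk]; rewrite (lam_walkS lt_mk); lia.
Qed.

Lemma upt_walkS m : (m < k)%N -> upt lam (walk m.+1) = upt lam (walk m) * t * q ^+ gap m.
Proof.
move=> lt_mk; apply: (upt_succ F k r_ge2); last exact: lam_walkS.
by rewrite rank0_walk // rank0_walk ?addnS // ltnW.
Qed.

Lemma uniq_walk_tuple (pos : nat -> nat) :
  (forall a b : 'I_k.+1, pos a = pos b -> a = b) ->
  (forall a, (a <= k)%N -> (pos a <= k)%N) -> uniq [tuple walk (pos a) | a < k.+1].
Proof.
move=> pos_inj pos_le.
apply/tuple_uniqP => a b; rewrite !tnth_mktuple.
by move/walk_inj => /(_ (pos_le _ (ltn_ord a)) (pos_le _ (ltn_ord b))) /pos_inj.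
Qed.

Lemma tnth_walk_tuple (pos : nat -> nat) m : (m <= k)%N ->
  tnth [tuple walk (pos a) | a < k.+1] (inord m) = walk (pos m).
Proof. by move=> le_mk; rewrite tnth_mktuple inordK. Qed.

Lemma chain_wheel : lam i - lam j <= (r.-1)%:Z - 1 ->
  is_wheel_at r (upt lam) [tuple walk a | a < k.+1].
Proof.
move=> small_gap.
have id_inj (a b : 'I_k.+1) : id (a : nat) = id b -> a = b by apply: ord_inj.
have walk_tuple := tnth_walk_tuple id.
apply/(is_wheel_atP r_ge2); split; first exact: @uniq_walk_tuple id id_inj (fun a => id).
exists gap; split=> [|a lt_ak|a lt_ak].
- by have := sum_gap; lia.
- by have le_ak := ltnW lt_ak; rewrite !walk_tuple // upt_walkS.
- by have le_ak := ltnW lt_ak; rewrite !walk_tuple //; apply: walk_gap0.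
Qed.

(* When the gaps add up to r-1, start the cycle just after a positive gap [p];
   the step from [walk k = j] back to [walk 0 = i] is then a pure t-step. *)
Lemma cyclic_wheel : lam i - lam j = (r.-1)%:Z -> (j < i)%N ->
  exists w : (k.+1).-tuple 'I_n, is_wheel_at r (upt lam) w.
Proof.
move=> full_gap lt_ji.
have sum_r1 : (\sum_(m < k) gap m = r.-1)%N by have := sum_gap; rewrite full_gap => -[].
have [p gap_p] : exists p : 'I_k, (0 < gap p)%N.
  apply/existsP; apply: contraT => /existsPn all0; move: sum_r1.
  by rewrite big1 => [|m _]; [lia | have := all0 m; rewrite lt0n negbK => /eqP].
pose shift (a : nat) := if (a + p.+1 < k.+1)%N then (a + p.+1)%N else (a + p.+1 - k.+1)%N.
have shift_le a : (a <= k)%N -> (shift a <= k)%N.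
  by rewrite /shift; have := ltn_ord p; case: ifP; lia.
have shift_inj (a b : 'I_k.+1) : shift a = shift b -> a = b.
  rewrite /shift => e; apply/val_inj; move: e.
  have := ltn_ord a; have := ltn_ord b; have := ltn_ord p.
  by case: (ltnP (a + p.+1) k.+1) => /=; case: (ltnP (b + p.+1) k.+1) => /=; lia.
have shiftS a : (a < k)%N -> shift a.+1 = if shift a == k then 0%N else (shift a).+1.
  move=> lt_ak; rewrite /shift; have := ltn_ord p.
  by case: (ltnP (a + p.+1) k.+1) => /=; case: (ltnP (a.+1 + p.+1) k.+1) => /=; case: eqP; lia.
have shift_lt a : (a < k)%N -> shift a != k -> (shift a < k)%N.
  by move=> lt_ak; rewrite ltn_neqAle => -> /=; apply: shift_le; apply: ltnW.
have walk_tuple := tnth_walk_tuple shift.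
exists [tuple walk (shift a) | a < k.+1].
apply/(is_wheel_atP r_ge2); split; first exact: uniq_walk_tuple shift_inj shift_le.
exists (fun a => if shift a == k then 0%N else gap (shift a)).
split=> [|a lt_ak|a lt_ak].
- by have := sum_rot_drop gap (ltn_ord p); rewrite -/shift sum_r1; lia.
- have le_ak := ltnW lt_ak; rewrite !walk_tuple ?shiftS //.
  case: eqP => [->|/eqP ne]; last exact/upt_walkS/shift_lt.
  by rewrite walk0 walk_last expr0 mulr1; apply: (upt_wrap F r_ge2 rank_ij); lia.
- have le_ak := ltnW lt_ak; rewrite !walk_tuple ?shiftS //.
  by case: eqP => [->|/eqP ne]; [rewrite walk0 walk_last | apply/walk_gap0/shift_lt].
Qed.

End NeighbourhoodWheels.

Section Density.
Variables (F : numClosedFieldType) (n k r : nat).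
Hypothesis r_ge2 : (2 <= r)%N.
Local Notation st := (sqrt_t F k r).
Local Notation q := (q_sp F k r).
Local Notation t := (t_sp F k r).
Local Notation upt := (@upt F n k r).
Local Notation pt := ('I_n -> KK F).

Variable f : laurent F n.
Hypothesis f_J3 : ideal_J3 k r f.
Variables (z : pt) (w : (k.+1).-tuple 'I_n) (s : nat -> nat).
Local Notation node m := (tnth w (inord m)).
Hypotheses (z_neq0 : forall i, z i != 0) (w_uniq : uniq w)
  (s_sum : (\sum_(a < k) s a <= r - 2)%N)
  (z_step : forall a, (a < k)%N -> z (node a.+1) = z (node a) * t * q ^+ s a)
  (s_ord : forall a, (a < k)%N -> s a = 0%N -> (node a < node a.+1)%N).

Lemma mem_wheel x : x \in w -> exists2 m, (m <= k)%N & x = node m.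
Proof. by move/tnthP => [a ->]; exists a; rewrite ?inord_val // -ltnS. Qed.

Lemma node_in m : node m \in w.
Proof. exact: mem_tnth. Qed.

Definition rep x := if x \in w then node 0 else x.

Lemma rep_id x : rep (rep x) = rep x.
Proof. by rewrite /rep; case: (boolP (x \in w)) => xw; rewrite ?node_in ?(negbTE xw). Qed.

Lemma rep_node m : rep (node m) = node 0.
Proof. by rewrite /rep node_in. Qed.

(* The point with block scales [y]: inside each block (the wheel, or a single
   index outside it) the coordinates keep the ratios of [z]. *)
Definition spread (y : pt) : pt := fun x => z x / z (rep x) * y (rep x).

Lemma spread_z : spread z =1 z.
Proof. by move=> x; rewrite /spread divfK. Qed.

Definition fits (lam : wt n) :=
  (forall m, (m < k)%N -> lam (node m.+1) = lam (node m) - (s m)%:Z) /\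
  (forall c, c \notin w -> lam (node 0) < lam c \/ lam c < lam (node k)).

Section Fits.
Variable lam : wt n.
Hypothesis lam_fits : fits lam.

Lemma lam_node m : (m <= k)%N -> lam (node m) = lam (node 0) - ((\sum_(l < m) s l)%N)%:Z.
Proof.
elim: m => [|m IH] le_mk; first by rewrite big_ord0 subr0.
by rewrite lam_fits.1 // IH 1?ltnW // big_ord_recr /= PoszD opprD addrA.
Qed.

Lemma lam_node_le a b : (a <= b)%N -> (b <= k)%N -> lam (node b) <= lam (node a).
Proof.
elim: b => [|b IH] le_ab le_bk; first by move: le_ab; rewrite leqn0 => /eqP ->.
have [lt_ab|lt_ba|->] := ltngtP a b.+1; [|lia|by []].
by rewrite lam_fits.1 //; have := IH lt_ab (ltnW le_bk); lia.
Qed.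

Lemma before_nodeS m : (m < k)%N -> before lam (node m) (node m.+1).
Proof.
move=> lt_mk; rewrite /before lam_fits.1 //.
have [s0|s_gt0] := posnP (s m); first by rewrite s0 subr0 ltxx eqxx s_ord.
by apply/orP; left; lia.
Qed.

Lemma before_node a b : (a < b)%N -> (b <= k)%N -> before lam (node a) (node b).
Proof.
move=> lt_ab; elim: b lt_ab => [//|b IH] lt_ab lt_bk.
have [lt_ab'|//|->] := ltngtP a b; last exact: before_nodeS.
  exact: before_trans (IH lt_ab' (ltnW lt_bk)) (before_nodeS lt_bk).
lia.
Qed.

Lemma rank0_nodeS m : (m < k)%N -> rank0 lam (node m.+1) = (rank0 lam (node m)).+1.
Proof.
move=> lt_mk; apply: rank0_succ; first exact: before_nodeS.
move=> c; case: (boolP (c \in w)) => [/mem_wheel [b le_bk ->] | cNw] mc cm.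
  have [lt_bm|lt_mb|eb] := ltngtP b m; last by rewrite eb (negbTE (before_irr _ _)) in mc.
    by have := before_asym (before_node lt_bm (ltnW lt_mk)); rewrite mc.
  have [lt_mb'|lt_bm'|eb] := ltngtP b m.+1; first lia.
    by have := before_asym (before_node lt_bm' le_bk); rewrite cm.
  by rewrite eb (negbTE (before_irr _ _)) in cm.
case: (lam_fits.2 c cNw) => lt_c.
  have /before_asym : before lam c (node m).
    by apply/orP; left; have := lam_node_le (leq0n m) (ltnW lt_mk); lia.
  by rewrite mc.
have /before_asym : before lam (node m.+1) c.
  by apply/orP; left; have := lam_node_le lt_mk (leqnn k); lia.
by rewrite cm.
Qed.

Lemma rank0_node m : (m <= k)%N -> rank0 lam (node m) = (rank0 lam (node 0) + m)%N.
Proof.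
elim: m => [|m IH] le_mk; first by rewrite addn0.
by rewrite rank0_nodeS // IH 1?ltnW // addnS.
Qed.

Lemma upt_nodeS m : (m < k)%N -> upt lam (node m.+1) = upt lam (node m) * t * q ^+ s m.
Proof. by move=> lt_mk; apply: (upt_succ F k r_ge2); [exact: rank0_nodeS | exact: lam_fits.1]. Qed.

Lemma spread_upt : spread (upt lam) =1 upt lam.
Proof.
move=> x; rewrite /spread; case: (boolP (x \in w)) => [/mem_wheel [m le_mk ->] | xNw].
  have chain (g : pt) : (forall a, (a < k)%N -> g (node a.+1) = g (node a) * t * q ^+ s a) ->
      g (node m) = g (node 0) * \prod_(l < m) (t * q ^+ s l).
    move=> gS; have gS' a : (a < k)%N -> g (node a.+1) = g (node a) * (t * q ^+ s a).
      by move=> lt_ak; rewrite mulrA gS.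
    exact: (chain_prodE (g := fun a => g (node a)) gS' le_mk).
  rewrite rep_node (chain z z_step) (chain _ upt_nodeS).
  by rewrite [z _ * _]mulrC mulfK // mulrC.
by rewrite /rep (negbTE xNw) divff // mul1r.
Qed.

Lemma fits_inS' : inS' k r lam.
Proof.
exists (node 0), (node k); have := lam_node (leqnn k); have := rank0_node (leqnn k).
rewrite /nbhd /rho2 => -> ->; split; last lia.
by apply/andP; split; [apply/eqP; lia | apply/orP; left; lia].
Qed.

Lemma leval_spread_upt : leval f (spread (upt lam)) = 0.
Proof. by rewrite (eq_leval f spread_upt); apply: f_J3; exact: fits_inS'. Qed.

End Fits.

Definition merge (R : {set 'I_n}) (y x : pt) : pt := fun h => if h \in R then y h else x h.

Definition separates (R : {set 'I_n}) (lam : wt n) :=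
  forall a b, rep a \in R -> rep b \notin R -> lam b < lam a.

Definition frees (R : {set 'I_n}) := forall y : pt, (forall i, y i != 0) ->
  forall lam, fits lam -> separates R lam -> leval f (spread (merge R y (upt lam))) = 0.

Lemma frees0 : frees set0.
Proof.
move=> y _ lam lam_fits _; rewrite -(leval_spread_upt lam_fits).
by apply: eq_leval => i; rewrite /spread /merge in_set0.
Qed.

Section FreeBlock.
Variables (R : {set 'I_n}) (j : 'I_n).
Hypotheses (rep_j : rep j = j) (jNR : j \notin R) (R_frees : frees R).
Variables (y : pt) (lam : wt n).
Hypotheses (y_neq0 : forall i, y i != 0) (lam_fits : fits lam)
  (lam_sep : separates (j |: R) lam).

(* Blocks in [R] sit at level 2, the block of [j] at level 1, the others at
   level 0; [raised N] lifts level 1 by N(r-1) and level 2 by N(r-1) plus a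
   margin larger than any weight difference, so the levels stay separated. *)
Definition level x : nat := if rep x \in R then 2%N else if rep x == j then 1%N else 0%N.

Definition margin : int := 1 + 2 * \sum_i `|lam i|.

Definition raise N x : int :=
  if rep x \in R then (r.-1 * N)%N%:Z + margin else if rep x == j then (r.-1 * N)%N%:Z else 0.

Definition raised N : wt n := fun x => lam x + raise N x.

Lemma lam_subr_lt_margin a b : lam b - lam a < margin.
Proof.
have lam_le c : `|lam c| <= \sum_i `|lam i| by rewrite (bigD1 c) //= lerDl sumr_ge0.
by have := lam_le a; have := lam_le b; rewrite /margin; lia.
Qed.

Lemma raised_lt N a b : (level b < level a)%N -> raised N b < raised N a.
Proof.
have shift_ge0 : 0 <= (r.-1 * N)%N%:Z by [].
have := lam_subr_lt_margin a b; have := @lam_sep a b.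
rewrite !in_setU1 /level /raised /raise.
by case: (rep a \in R); case: (rep b \in R); case: (rep a == j); case: (rep b == j) => //= sep;
  try have := sep isT isT; lia.
Qed.

Lemma raise_level N a b : level a = level b -> raise N a = raise N b.
Proof.
rewrite /level /raise.
by case: (rep a \in R); case: (rep b \in R); case: (rep a == j); case: (rep b == j).
Qed.

Lemma level_node m : level (node m) = level (node 0).
Proof. by rewrite /level rep_node -(rep_node 0) rep_id. Qed.

Lemma raised_fits N : fits (raised N).
Proof.
have raise_node m : raise N (node m) = raise N (node 0) by apply/raise_level/level_node.
split=> [m lt_mk|c cNw]; first by rewrite /raised !raise_node lam_fits.1 //; lia.
have [lt_c|lt_0|eq_c] := ltngtP (level c) (level (node 0)).
- by right; apply: raised_lt; rewrite level_node.
- by left; apply: raised_lt.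
- rewrite /raised (raise_level N eq_c) -(raise_node k).
  by case: (lam_fits.2 c cNw) => ?; [left|right]; lia.
Qed.

Lemma raised_separates N : separates R (raised N).
Proof. by move=> a b aR bNR; apply: raised_lt; rewrite /level aR (negbTE bNR); case: eqP. Qed.

Lemma raised_level0 N x : level x = 0%N -> raised N x = lam x.
Proof.
by rewrite /level /raised /raise; case: (rep x \in R); case: (rep x == j) => //= _; rewrite addr0.
Qed.

Lemma upt_raised_level0 N h : level h = 0%N -> upt (raised N) h = upt lam h.
Proof.
move=> h0; have rank_h : rank0 (raised N) h = rank0 lam h.
  apply: eq_rank0 => x; have [x0|x_gt0] := posnP (level x).
    by rewrite /before !raised_level0.
  have -> : before (raised N) x h by apply/orP; left; apply: raised_lt; rewrite h0.
  apply/esym/orP; left; apply: lam_sep.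
    by move: x_gt0; rewrite /level in_setU1; case: (rep x \in R); case: (rep x == j).
  by move: h0; rewrite /level in_setU1; case: (rep h \in R); case: (rep h == j).
by rewrite /Defs.upt /rho2 rank_h raised_level0.
Qed.

Lemma level_j : level j = 1%N.
Proof. by rewrite /level rep_j (negbTE jNR) eqxx. Qed.

(* The raise does not move [j] in the ρ-order, and q^{-N(r-1)} = t^{N(k+1)}. *)
Lemma upt_raised_j N : upt (raised N) j = upt (raised 0) j * st ^+ (2 * k.+1 * N).
Proof.
have rank_j : rank0 (raised N) j = rank0 (raised 0) j.
  apply: eq_rank0 => x; have [lt_x1|gt_x1|eq_x1] := ltngtP (level x) 1.
  - have := raised_lt N (a := j) (b := x); have := raised_lt 0 (a := j) (b := x).
    rewrite level_j /before => /(_ lt_x1) ? /(_ lt_x1) ?.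
    by apply/idP/idP => /orP [?|/andP [/eqP ? _]]; lia.
  - have := raised_lt N (a := x) (b := j); have := raised_lt 0 (a := x) (b := j).
    by rewrite level_j /before => /(_ gt_x1) -> /(_ gt_x1) ->.
  - apply: before_subrE; rewrite /raised (raise_level N (a := x) (b := j)) ?level_j //.
    by rewrite (raise_level 0 (a := x) (b := j)) ?level_j //; lia.
have raised_j M : raised M j = lam j + (r.-1 * M)%N%:Z.
  by rewrite /raised /raise rep_j (negbTE jNR) eqxx.
rewrite /Defs.upt /rho2 rank_j !raised_j muln0 addr0.
have -> : - (lam j + (r.-1 * N)%N%:Z) = - lam j + - (r.-1 * N)%N%:Z by lia.
rewrite (exprzDr (x := q)) ?unitfE ?q_sp_neq0 // -exprnN -mulrA.
by rewrite exprM -exprVn q_sp_expNr // -exprM.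
Qed.

Lemma upt_raised_j_inj : injective (fun N => upt (raised N) j).
Proof.
move=> N1 N2 /=; rewrite !(upt_raised_j N1) (upt_raised_j N2) => /mulfI eN.
apply: (sqrt_t_expM_inj (F := F) (k := k) r_ge2 (M := (2 * k.+1)%N)) => //.
by apply: eN; apply: upt_neq0.
Qed.

Lemma frees_setU1_at : leval f (spread (merge (j |: R) y (upt lam))) = 0.
Proof.
pose a i := z i / z (rep i) * (if rep i == j then 1 else merge R y (upt lam) (rep i)).
pose b i := rep i == j.
have root N : leval f (fun i => a i * (if b i then upt (raised N) j else 1)) = 0.
  rewrite -(R_frees y_neq0 (raised_fits N) (raised_separates N)).
  apply: eq_leval => i; rewrite /spread /a /b /merge.
  case iR: (rep i \in R).
    have -> : (rep i == j) = false by apply: (contraNF _ jNR) => /eqP <-.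
    by rewrite mulr1.
  case: eqP => [->|ne]; first by rewrite mulr1.
  by rewrite mulr1 upt_raised_level0 // /level rep_id iR; case: eqP.
rewrite -(leval_scale_eq0 upt_raised_j_inj (fun N => upt_neq0 F k r_ge2 _ _) root (y_neq0 j)).
apply: eq_leval => i; rewrite /spread /a /b /merge in_setU1.
by case: eqP => [->|_]; rewrite mulr1.
Qed.

End FreeBlock.

Lemma frees_setU1 (R : {set 'I_n}) j : rep j = j -> j \notin R -> frees R -> frees (j |: R).
Proof. by move=> rep_j jNR R_frees y y_neq0 lam lam_fits lam_sep; apply: frees_setU1_at. Qed.

Lemma frees_reps : frees [set x | rep x == x].
Proof.
rewrite -[[set x | _]]set_enum.
have : {in enum [set x | rep x == x], forall x, rep x = x}.
  by move=> x; rewrite mem_enum inE => /eqP.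
elim: (enum _) (enum_uniq (mem [set x | rep x == x])) => [|x xs IH].
  by rewrite set_nil => _ _; exact: frees0.
move=> /= /andP [xNxs xs_uniq] reps; rewrite set_cons.
apply: frees_setU1; [exact: reps (mem_head _ _) | by rewrite inE |].
by apply: IH => // x' x'xs; apply: reps; rewrite inE x'xs orbT.
Qed.

Definition wheel_wt : wt n :=
  fun x => if x \in w then - ((\sum_(l < index x w) s l)%N)%:Z else r%:Z.

Lemma index_node m : (m <= k)%N -> index (node m) w = m.
Proof.
move=> le_mk; rewrite (tnth_nth (node 0)) index_uniq // ?inordK // ?size_tuple ltnS //.
Qed.

Lemma wheel_wt_fits : fits wheel_wt.
Proof.
split=> [m lt_mk|c cNw].
  have le_mk := ltnW lt_mk.
  by rewrite /wheel_wt !node_in !index_node // big_ord_recr /= PoszD opprD.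
by left; rewrite /wheel_wt (negbTE cNw) node_in index_node // big_ord0; lia.
Qed.

Lemma leval_wheel_point : leval f z = 0.
Proof.
have sep : separates [set x | rep x == x] wheel_wt by move=> a b _; rewrite inE rep_id eqxx.
rewrite -(frees_reps z_neq0 wheel_wt_fits sep); apply: eq_leval => i.
by rewrite -{1}spread_z /spread /merge inE rep_id eqxx.
Qed.

End Density.

Section Inclusions.
Variables (F : numClosedFieldType) (n k r : nat).
Hypothesis r_ge2 : (2 <= r)%N.
Implicit Types (lam : wt n) (f : laurent F n).
Local Notation upt := (@upt F n k r).

Lemma nbhdP lam i j : nbhd k.+1 r.-1 lam i j ->
  rank0 lam j = (rank0 lam i + k)%N /\
  (lam i - lam j <= (r.-1)%:Z - 1 \/ lam i - lam j = (r.-1)%:Z /\ (j < i)%N).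
Proof.
rewrite /nbhd /rho2 => /andP [/eqP drho /orP [le_gap | /andP [/eqP eq_gap lt_ji]]].
  by split; [lia | left].
by split; [lia | right].
Qed.

Lemma inS_wheel lam : inS k r lam -> exists w : (k.+1).-tuple 'I_n, is_wheel_at r (upt lam) w.
Proof.
case=> i [j] /nbhdP [rank_ij [small_gap | [full_gap lt_ji]]].
  by eexists; exact: (chain_wheel F r_ge2 rank_ij small_gap).
exact: (cyclic_wheel F r_ge2 rank_ij full_gap lt_ji).
Qed.

Lemma inS'_inS lam : inS' k r lam -> inS k r lam.
Proof. by case=> i [j [ij _]]; exists i, j. Qed.

Lemma sharp_gt0 lam :
  (0 < @sharp F n k r lam)%N <-> exists w : (k.+1).-tuple 'I_n, is_wheel_at r (upt lam) w.
Proof.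
rewrite card_gt0; split=> [/set0Pn [X /imsetP [w]] | [w wheel_w]].
  by rewrite inE; exists w.
by apply/set0Pn; exists [set rot_tuple j w | j : 'I_k.+1]; apply: imset_f; rewrite inE.
Qed.

Lemma wheel_inZ lam (w : (k.+1).-tuple 'I_n) : is_wheel_at r (upt lam) w -> inZ k r (upt lam).
Proof. by move=> wheel_w; split; [exact: upt_neq0 | exists w]. Qed.

Lemma ideal_I_J1 f : ideal_I k r f -> ideal_J1 k r f.
Proof. by move=> f_I lam /sharp_gt0 [w /wheel_inZ]; apply: f_I. Qed.

Lemma ideal_I_J2 f : ideal_I k r f -> ideal_J2 k r f.
Proof. by move=> f_I lam /inS_wheel [w /wheel_inZ]; apply: f_I. Qed.

Lemma ideal_J1_J3 f : ideal_J1 k r f -> ideal_J3 k r f.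
Proof. by move=> f_J1 lam /inS'_inS /inS_wheel /sharp_gt0; apply: f_J1. Qed.

Lemma ideal_J2_J3 f : ideal_J2 k r f -> ideal_J3 k r f.
Proof. by move=> f_J2 lam /inS'_inS; apply: f_J2. Qed.

Lemma ideal_J3_I f : ideal_J3 k r f -> ideal_I k r f.
Proof.
move=> f_J3 z [z_neq0 [w /(is_wheel_atP r_ge2) [w_uniq [s [s_sum z_step s_ord]]]]].
exact: (leval_wheel_point r_ge2 f_J3 z_neq0 w_uniq s_sum z_step s_ord).
Qed.

End Inclusions.

Theorem lemma3p1 (F : numClosedFieldType) (n k r : nat)
  (hn : (2 <= n)%N) (hk1 : (1 <= k)%N) (hk2 : (k <= n - 1)%N) (hr : (2 <= r)%N)
  (f : laurent F n) :
  (ideal_I k r f <-> ideal_J1 k r f) /\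
  (ideal_I k r f <-> ideal_J2 k r f) /\
  (ideal_I k r f <-> ideal_J3 k r f).
Proof.
have I_J1 := @ideal_I_J1 F n k r hr f; have J1_J3 := @ideal_J1_J3 F n k r hr f.
have I_J2 := @ideal_I_J2 F n k r hr f; have J2_J3 := @ideal_J2_J3 F n k r f.
have J3_I := @ideal_J3_I F n k r hr f.
split; [|split]; split.
- exact: I_J1.
- by move/J1_J3/J3_I.
- exact: I_J2.
- by move/J2_J3/J3_I.
- by move/I_J1/J1_J3.
- exact: J3_I.
Qed.
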